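(* Let $n\ge2$, $1\le r\le n-1$ and $\alpha,\beta,\gamma\in\mathbb{Z}_2^n$. Then (1) $\mathrm{adp}^{\mathrm{XR}}_r(\alpha,\beta\to\gamma)=\mathrm{adp}^{\mathrm{XR}}_r(\beta,\alpha\to\gamma)$; (2) $\mathrm{adp}^{\mathrm{XR}}_r(\alpha,\beta\to\gamma)=\mathrm{adp}^{\mathrm{XR}}_r(\alpha+2^{n-1},\beta+2^{n-1}\to\gamma)$; (3) $\mathrm{adp}^{\mathrm{XR}}_r(\alpha,\beta\to\gamma)=\mathrm{adp}^{\mathrm{XR}}_r(\pm\alpha,\pm\beta\to\pm\gamma)$ for every independent choice of the signs (each $\pm x$ means either $x$ or $-x$).
   Context: For $x\in\mathbb{Z}_2^n$ write $x=(x_0,\dots,x_{n-1})$ and identify $x$ with the integer $\sum_{i=0}^{n-1}x_i2^{n-1-i}$ ($x_0$ most significant); $x+y$, $x-y$, $-x$ are computed modulo $2^n$. $\oplus$ is bitwise XOR and $x\lll r=(x_r,\dots,x_{n-1},x_0,\dots,x_{r-1})$. For $f:(\mathbb{Z}_2^n)^k\to\mathbb{Z}_2^n$, $\mathrm{adp}^f(\alpha_1,\dots,\alpha_k\to\alpha_{k+1})=2^{-kn}\#\{(x_1,\dots,x_k): f(x_1+\alpha_1,\dots,x_k+\alpha_k)=f(x_1,\dots,x_k)+\alpha_{k+1}\}$. $\mathrm{adp}^{\mathrm{XR}}_r$ denotes $\mathrm{adp}^f$ for $f(x,y)=(x\oplus y)\lll r$. *)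

From mathcomp Require Import all_boot all_order all_algebra.
Set Implicit Arguments. Unset Strict Implicit. Unset Printing Implicit Defensive.

(* Z_2^n, identified with the integers {0,...,2^n-1}: x = sum_i x_i 2^(n-1-i),
   bit x_0 most significant. *)
Definition word (n : nat) := 'I_(2 ^ n).

Lemma pow2_gt0 (n : nat) : 0 < 2 ^ n.
Proof. by rewrite expn_gt0. Qed.

Definition mkw (n m : nat) : word n := Ordinal (ltn_pmod m (pow2_gt0 n)).

Definition bitw (n : nat) (x : word n) (i : nat) : bool := odd (x %/ 2 ^ (n - 1 - i)).

Definition of_bits (n : nat) (b : nat -> bool) : word n :=
  mkw n (\sum_(i < n) b i * 2 ^ (n - 1 - i)).

Definition addw (n : nat) (x y : word n) : word n := mkw n (x + y).
Definition negw (n : nat) (x : word n) : word n := mkw n (2 ^ n - x).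
Definition xorw (n : nat) (x y : word n) : word n :=
  of_bits n (fun i => bitw x i (+) bitw y i).
Definition rotlw (n r : nat) (x : word n) : word n :=
  of_bits n (fun i => bitw x ((i + r) %% n)).

Definition XR (n r : nat) (x y : word n) : word n := rotlw r (xorw x y).

Definition adp2 (n : nat) (f : word n -> word n -> word n) (a1 a2 a3 : word n) : rat :=
  (#|[set p : word n * word n |
      f (addw p.1 a1) (addw p.2 a2) == addw (f p.1 p.2) a3]|)%:R
  / (2 ^ (2 * n))%:R.

Definition adpXR (n r : nat) (a b c : word n) : rat := adp2 (@XR n r) a b c.

Definition sgnw (n : nat) (s : bool) (x : word n) : word n := if s then negw x else x.

From mathcomp Require Import all_boot all_order all_algebra.
From mathcomp Require Import zify ring.
Set Implicit Arguments. Unset Strict Implicit. Unset Printing Implicit Defensive.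
Import GRing.Theory.

(* Each identity comes from a bijective change of variables (x, y) |-> g (x, y)
   on the pairs counted by adp.  Swapping x and y gives (1) since xor is
   commutative.  Adding 2^(n-1) flips only the most significant bit, so adding
   it to both inputs leaves x xor y unchanged, which gives (2).  For (3), the
   translation (x, y) |-> (x - a, y - b) negates all three differences, and the
   bitwise complement x |-> ~x = -1 - x, which commutes with xor and rotation,
   negates the first input difference together with the output difference;
   with commutativity these sign changes generate all eight sign patterns. *)

Definition bit (k m : nat) : bool := odd (m %/ 2 ^ k).

Lemma bit0 m : bit 0 m = odd m.
Proof. by rewrite /bit expn0 divn1. Qed.

Lemma bitS k m : bit k.+1 m = bit k m./2.
Proof. by rewrite /bit expnS divnMA divn2. Qed.

Lemma bit_modX k N m : k < N -> bit k (m %% 2 ^ N) = bit k m.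
Proof.
move=> lt_kN; rewrite /bit {2}(divn_eq m (2 ^ N)).
have -> : 2 ^ N = 2 ^ (N - k) * 2 ^ k by rewrite -expnD subnK // ltnW.
rewrite mulnA addnC divnDMl ?expn_gt0 // oddD oddM oddX.
by rewrite subn_eq0 leqNgt lt_kN andbF addbF.
Qed.

Lemma bit_addX k j m : k <= j -> bit k (m + 2 ^ j) = bit k m (+) (k == j).
Proof.
move=> le_kj; rewrite /bit.
have -> : 2 ^ j = 2 ^ (j - k) * 2 ^ k by rewrite -expnD subnK.
by rewrite divnDMl ?expn_gt0 // oddD oddX orbF subn_eq0 eqn_leq le_kj.
Qed.

Lemma bit_inj N x y : x < 2 ^ N -> y < 2 ^ N ->
  (forall k, k < N -> bit k x = bit k y) -> x = y.
Proof.
elim: N x y => [|N IHN] x y.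
  by rewrite expn0 !ltnS !leqn0 => /eqP -> /eqP ->.
rewrite expnS => ltx lty eq_bits.
have eq_half : x./2 = y./2.
  by apply: IHN => [||k lt_kN]; rewrite -?bitS ?eq_bits //; lia.
have eq_odd : odd x = odd y by rewrite -!bit0 eq_bits.
by rewrite -(odd_double_half x) -(odd_double_half y) eq_half eq_odd.
Qed.

Lemma bit_sum N (b : nat -> bool) i : i < N ->
  bit (N - 1 - i) (\sum_(j < N) b j * 2 ^ (N - 1 - j)) = b i.
Proof.
elim: N i => [|N IHN] i // lt_iN.
rewrite big_ord_recr /= subSS subn0 subnn expn0 muln1.
have -> : \sum_(j < N) b j * 2 ^ (N - j) = (\sum_(j < N) b j * 2 ^ (N - 1 - j)).*2.
  rewrite -mul2n big_distrr /=; apply: eq_bigr => j _.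
  by rewrite mulnCA -expnS; congr (_ * 2 ^ _); have := ltn_ord j; lia.
rewrite addnC; case: (ltngtP i N) => [lt_iN'|gt_iN|->]; last 2 first.
- lia.
- by rewrite subnn bit0 oddD odd_double addbF oddb.
have -> : N - i = (N - 1 - i).+1 by lia.
by rewrite bitS half_bit_double IHN.
Qed.

Lemma bit_compl M x k : x < 2 ^ M -> k < M -> bit k (2 ^ M - 1 - x) = ~~ bit k x.
Proof.
elim: k M x => [|k IHk] [|M] x // ltx lt_kM.
  rewrite !bit0 oddB; last by lia.
  by rewrite oddB ?expn_gt0 // oddX.
rewrite expnS in ltx; rewrite !bitS -(IHk M x./2); last 2 first.
- by rewrite -divn2; lia.
- by [].
by congr bit; rewrite expnS -!divn2; lia.
Qed.

Section Bits.
Variable n : nat.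
Implicit Types (x y : word n) (b : nat -> bool).

Definition notw x : word n := mkw n (2 ^ n - 1 - x).

Lemma bitwE x i : bitw x i = bit (n - 1 - i) x.
Proof. by []. Qed.

Lemma wordP x y : (forall i, i < n -> bitw x i = bitw y i) -> x = y.
Proof.
move=> eq_bits; apply/val_inj/(@bit_inj n); rewrite ?ltn_ord // => k lt_kn.
have := eq_bits (n - 1 - k); rewrite !bitwE (_ : n - 1 - (n - 1 - k) = k); last by lia.
by apply; lia.
Qed.

Lemma bitw_of_bits b i : i < n -> bitw (of_bits n b) i = b i.
Proof. by move=> lt_in; rewrite bitwE /= bit_modX ?bit_sum //; lia. Qed.

Lemma eq_of_bits b b' : (forall i, i < n -> b i = b' i) -> of_bits n b = of_bits n b'.
Proof. by move=> eq_b; congr mkw; apply: eq_bigr => i _; rewrite eq_b. Qed.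

Lemma bitw_xorw x y i : i < n -> bitw (xorw x y) i = bitw x i (+) bitw y i.
Proof. exact: bitw_of_bits. Qed.

Lemma bitw_notw x i : i < n -> bitw (notw x) i = ~~ bitw x i.
Proof. by move=> lt_in; rewrite !bitwE /= bit_modX ?bit_compl //; lia. Qed.

Lemma bitw_addw_msb x i : i < n ->
  bitw (addw x (mkw n (2 ^ (n - 1)))) i = bitw x i (+) (i == 0).
Proof.
move=> lt_in; rewrite !bitwE /= bit_modX; last by lia.
rewrite (modn_small (m := 2 ^ (n - 1))); last by rewrite ltn_exp2l //; lia.
by rewrite bit_addX; [congr addb; lia | lia].
Qed.

Lemma xorwC x y : xorw x y = xorw y x.
Proof. by apply: eq_of_bits => i _; rewrite addbC. Qed.

Lemma xorw_notwl x y : xorw (notw x) y = notw (xorw x y).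
Proof.
by apply: wordP => i lt_in; rewrite bitw_notw ?bitw_xorw ?bitw_notw // addNb.
Qed.

Lemma xorw_addw_msb x y (h := mkw n (2 ^ (n - 1))) :
  xorw (addw x h) (addw y h) = xorw x y.
Proof.
by apply: eq_of_bits => i lt_in; rewrite !bitw_addw_msb // addbACA addbb addbF.
Qed.

Lemma rotlw_notw r x : rotlw r (notw x) = notw (rotlw r x).
Proof.
apply: wordP => i lt_in; have lt_rot : (i + r) %% n < n by rewrite ltn_mod; lia.
by rewrite bitw_notw // !bitw_of_bits // bitw_notw.
Qed.

End Bits.

Section Arithmetic.
Local Open Scope ring_scope.
Variable n : nat.
Hypothesis n_gt0 : (0 < n)%N.
Implicit Types x y a : word n.

Let exp2n_gt1 : (1 < 2 ^ n)%N.
Proof. by rewrite -{1}(expn0 2) ltn_exp2l. Qed.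

Definition toZ x : 'Z_(2 ^ n) := (val x)%:R.

Lemma toZ_inj : injective toZ.
Proof.
have toZ_val x : toZ x = x :> nat by rewrite /toZ val_Zp_nat // modn_small ?ltn_ord.
by move=> x y eq_xy; apply: val_inj; rewrite /= -toZ_val eq_xy toZ_val.
Qed.

Lemma toZ_mkw m : toZ (mkw n m) = m%:R.
Proof. exact: Zp_nat_mod. Qed.

Lemma toZ_addw x y : toZ (addw x y) = toZ x + toZ y.
Proof. by rewrite toZ_mkw natrD. Qed.

Lemma toZ_exp2n : (2 ^ n)%N%:R = 0 :> 'Z_(2 ^ n).
Proof. by rewrite -(Zp_nat_mod exp2n_gt1) modnn. Qed.

Lemma toZ_negw x : toZ (negw x) = - toZ x.
Proof. by rewrite toZ_mkw natrB ?toZ_exp2n ?sub0r // ltnW. Qed.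

Lemma toZ_notw x : toZ (notw x) = -1 - toZ x.
Proof.
rewrite toZ_mkw -subnDA natrB; last by have := ltn_ord x; lia.
by rewrite toZ_exp2n natrD sub0r opprD.
Qed.

Let toZE := (toZ_addw, toZ_negw, toZ_notw).

Lemma addwA : associative (@addw n).
Proof. by move=> x y z; apply: toZ_inj; rewrite !toZE addrA. Qed.

Lemma addwNK a : cancel (fun x => addw x (negw a)) (fun x => addw x a).
Proof. by move=> x; apply: toZ_inj; rewrite !toZE subrK. Qed.

Lemma negwK : involutive (@negw n).
Proof. by move=> x; apply: toZ_inj; rewrite !toZE opprK. Qed.

Lemma notwK : involutive (@notw n).
Proof. by move=> x; apply: toZ_inj; rewrite !toZE; ring. Qed.

Lemma addw_notw x a : addw (notw x) a = notw (addw x (negw a)).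
Proof. by apply: toZ_inj; rewrite !toZE; ring. Qed.

Lemma eq_addwN x y a : (x == addw y (negw a)) = (y == addw x a).
Proof. by rewrite -!(inj_eq toZ_inj) !toZE eq_sym subr_eq. Qed.

End Arithmetic.

Section Differentials.
Local Open Scope ring_scope.
Variables (n : nat) (f : word n -> word n -> word n).
Implicit Types a b c : word n.

Definition adp_eqn a b c (p : word n * word n) : bool :=
  f (addw p.1 a) (addw p.2 b) == addw (f p.1 p.2) c.

Lemma adp2_change_var (g : word n * word n -> word n * word n) a b c a' b' c' :
  injective g -> (forall p, adp_eqn a' b' c' p = adp_eqn a b c (g p)) ->
  adp2 f a b c = adp2 f a' b' c'.
Proof.
move=> g_inj eqn_g; rewrite /adp2 -(card_preimset _ g_inj).
by congr (_%:R / _); apply: eq_card => p; rewrite !inE; exact: esym (eqn_g p).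
Qed.

Hypothesis fC : commutative f.

Lemma adp2C a b c : adp2 f a b c = adp2 f b a c.
Proof.
apply: (@adp2_change_var (fun p => (p.2, p.1))) => [[x y] [x' y'] [-> ->] //|].
by case=> x y; rewrite /adp_eqn /= fC [f y x]fC.
Qed.

Hypothesis n_gt0 : (0 < n)%N.

Lemma adp2_opp a b c : adp2 f a b c = adp2 f (negw a) (negw b) (negw c).
Proof.
apply: (@adp2_change_var (fun p => (addw p.1 (negw a), addw p.2 (negw b)))).
  by apply: (can_inj (g := fun p => (addw p.1 a, addw p.2 b))) => -[x y]; rewrite /= !addwNK.
by case=> x y; rewrite /adp_eqn /= !addwNK // eq_addwN.
Qed.

Lemma adp2_addw_const h a b c :
  (forall x y, f (addw x h) (addw y h) = f x y) ->
  adp2 f a b c = adp2 f (addw a h) (addw b h) c.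
Proof.
move=> f_h; apply: (@adp2_change_var id) => // p.
by rewrite /adp_eqn !addwA // f_h.
Qed.

Hypothesis f_notwl : forall x y, f (notw x) y = notw (f x y).

Lemma adp2_negl a b c : adp2 f (negw a) b c = adp2 f a b (negw c).
Proof.
rewrite -{1}[c](negwK n_gt0); symmetry.
apply: (@adp2_change_var (fun p => (notw p.1, p.2))).
  by apply: (can_inj (g := fun p => (notw p.1, p.2))) => -[x y]; rewrite /= notwK.
case=> x y; rewrite /adp_eqn /= f_notwl !addw_notw // f_notwl.
by rewrite (inj_eq (can_inj (notwK n_gt0))).
Qed.

Lemma adp2_negr a b c : adp2 f a (negw b) c = adp2 f a b (negw c).
Proof. by rewrite adp2C adp2_negl adp2C. Qed.

Lemma adp2_sgnw s1 s2 s3 a b c :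
  adp2 f (sgnw s1 a) (sgnw s2 b) (sgnw s3 c) = adp2 f a b c.
Proof.
have adp2_negc a' b' c' : adp2 f a' b' (negw c') = adp2 f a' b' c'.
  by rewrite adp2_opp -adp2_negr -adp2_negl !negwK.
by case: s1 s2 s3 => [] [] [] /=; rewrite ?adp2_negl ?adp2_negr ?adp2_negc.
Qed.

End Differentials.

Lemma XRC n r : commutative (@XR n r).
Proof. by move=> x y; rewrite /XR xorwC. Qed.

Lemma XR_notwl n r (x y : word n) : XR r (notw x) y = notw (XR r x y).
Proof. by rewrite /XR xorw_notwl rotlw_notw. Qed.

Lemma XR_addw_msb n r (x y : word n) (h := mkw n (2 ^ (n - 1))) :
  XR r (addw x h) (addw y h) = XR r x y.
Proof. by rewrite /XR xorw_addw_msb. Qed.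

Theorem theorem5 (n r : nat) (hn : 2 <= n) (hr1 : 1 <= r) (hr2 : r <= n - 1)
    (a b c : word n) :
  adpXR r a b c = adpXR r b a c /\
  adpXR r a b c = adpXR r (addw a (mkw n (2 ^ (n - 1)))) (addw b (mkw n (2 ^ (n - 1)))) c /\
  (forall s1 s2 s3 : bool,
     adpXR r a b c = adpXR r (sgnw s1 a) (sgnw s2 b) (sgnw s3 c)).
Proof.
have n_gt0 : 0 < n by apply: leq_trans hn.
split; first exact: adp2C (@XRC n r) _ _ _.
split; first exact: adp2_addw_const n_gt0 _ _ _ _ (@XR_addw_msb n r).
by move=> s1 s2 s3; rewrite /adpXR adp2_sgnw //; [apply: XRC | apply: XR_notwl].
Qed.
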